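(* Let $\mathcal G=(\mathcal N,E)$ be an undirected graph on $N$ nodes with adjacency-type matrix $A$ and maximal degree $d_{\max}$ (defined in the context), and let $x^\star$ be any solution of $$\min_{x\in\mathbb R^N}\mathbf 1^\top x\quad\text{s.t.}\quad Ax\ge\mathbf 1,\ x\ge 0.$$ Run Algorithm 1 (described in the context) with $\delta=\epsilon$ and $\alpha=\frac{\delta}{2(d_{\max}+1)^2}$, where $\epsilon>0$. Then the $(1+\epsilon)$-approximation ratio $\frac{\mathbf 1^\top x^{(K_\epsilon)}-\mathbf 1^\top x^\star}{\mathbf 1^\top x^\star}\le\epsilon$ is achieved after $K_\epsilon=O\big(d_{\max}^{3/2}/\epsilon\big)$ iterations; precisely, there is an absolute constant $C>0$ such that for all $\epsilon\in(0,1]$ and all such graphs the ratio holds for every $k\ge C\,(d_{\max}+1)^{3/2}/\epsilon$.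
   Context: $A$ is the $N\times N$ symmetric matrix with $A_{ii}=1$ for all $i$ and, for $i\ne j$, $A_{ij}=1$ if $\{i,j\}\in E$, $A_{ij}=0$ otherwise. $\Omega_i$ is the closed one-hop neighborhood of node $i$ (its neighbors together with $i$). $d_{\max}$ is the maximal degree of $\mathcal G$, where the degree of $i$ is its number of neighbors excluding $i$, i.e. $|\Omega_i|-1$. $\mathbf 1$ is the all-ones vector, $[c]_+=\max\{0,c\}$, and $\mathcal P_{[0,1]}(c)=\min\{1,\max\{0,c\}\}$. Algorithm 1: initialize $\lambda_i^{(0)}=0$ and $z_i^{(-1)}=0$ for all $i$ (the value of $\overline x_j^{(-1)}$ is irrelevant since it is multiplied by $0$). For $k=0,1,2,\dots$, each node $i$ computes $$\widehat x_i^{(k)}=\mathcal P_{[0,1]}\Big(\tfrac1\delta\big(\textstyle\sum_{j\in\Omega_i}\lambda_j^{(k)}-1\big)\Big),$$ and then $$z_i^{(k)}=z_i^{(k-1)}+\tfrac{k+1}{2}\Big(1-\textstyle\sum_{j\in\Omega_i}\widehat x_j^{(k)}\Big),\qquad \mu_i^{(k)}=\Big[\lambda_i^{(k)}+\alpha\big(1-\textstyle\sum_{j\in\Omega_i}\widehat x_j^{(k)}\big)\Big]_+,$$ $$\lambda_i^{(k+1)}=\tfrac{k+1}{k+3}\mu_i^{(k)}+\tfrac{2}{k+3}\,\alpha\,[z_i^{(k)}]_+,\qquad \overline x_j^{(k)}=\tfrac{k}{k+2}\overline x_j^{(k-1)}+\tfrac{2}{k+2}\widehat x_j^{(k)},$$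 $$x_i^{(k)}=\overline x_i^{(k)}+\Big[1-\textstyle\sum_{j\in\Omega_i}\overline x_j^{(k)}\Big]_+ .$$ *)

From HB Require Import structures.
From mathcomp Require Import all_boot all_order all_algebra.
From mathcomp Require Import reals.
Set Implicit Arguments. Unset Strict Implicit. Unset Printing Implicit Defensive.
Import Order.TTheory GRing.Theory Num.Theory.
Local Open Scope ring_scope.

Section Defs.
Variable R : realType.
Variable N : nat.
(* undirected graph on nodes 'I_N : symmetric irreflexive edge relation e *)
Variable e : rel 'I_N.

Definition Omega (i : 'I_N) : {set 'I_N} := [set j | (j == i) || e i j].

Definition degree (i : 'I_N) : nat := (#|Omega i|).-1.
Definition dmax : nat := \max_(i : 'I_N) degree i.

Definition adjA : 'M[R]_N := \matrix_(i, j) (((i == j) || e i j) : bool)%:R.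

Definition ones : 'cV[R]_N := const_mx 1.

Definition lp_feasible (x : 'cV[R]_N) : Prop :=
  (forall i, 1 <= (adjA *m x) i 0) /\ (forall i, 0 <= x i 0).
Definition lp_obj (x : 'cV[R]_N) : R := \sum_i x i 0.
Definition lp_optimal (x : 'cV[R]_N) : Prop :=
  lp_feasible x /\ forall y, lp_feasible y -> lp_obj x <= lp_obj y.

Definition pos (c : R) : R := Num.max 0 c.
Definition proj01 (c : R) : R := Num.min 1 (Num.max 0 c).

Definition nsum (v : 'I_N -> R) (i : 'I_N) : R := \sum_(j in Omega i) v j.

Variables delta alpha : R.

(* state before iteration k : (lambda^(k), z^(k-1), xbar^(k-1)) *)
Record alg_state := AlgState {
  st_lambda : 'I_N -> R; st_z : 'I_N -> R; st_xbar : 'I_N -> R }.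

Definition xhat_of (s : alg_state) (i : 'I_N) : R :=
  proj01 (delta^-1 * (nsum (st_lambda s) i - 1)).

Definition alg_step (k : nat) (s : alg_state) : alg_state :=
  let xh := xhat_of s in
  let zk := fun i => st_z s i + (k.+1)%:R / 2 * (1 - nsum xh i) in
  let mu := fun i => pos (st_lambda s i + alpha * (1 - nsum xh i)) in
  let lam := fun i => (k.+1)%:R / (k.+3)%:R * mu i
                      + 2 / (k.+3)%:R * alpha * pos (zk i) in
  let xb := fun j => k%:R / (k.+2)%:R * st_xbar s j + 2 / (k.+2)%:R * xh j in
  AlgState lam zk xb.

Definition alg_init : alg_state := AlgState (fun _ => 0) (fun _ => 0) (fun _ => 0).

Fixpoint alg_state_at (k : nat) : alg_state :=
  if k is k'.+1 then alg_step k' (alg_state_at k') else alg_init.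

Definition xbar (k : nat) : 'I_N -> R := st_xbar (alg_state_at k.+1).

Definition alg_x (k : nat) : 'cV[R]_N :=
  \col_i (xbar k i + pos (1 - nsum (xbar k) i)).

End Defs.

From HB Require Import structures.
From mathcomp Require Import all_boot all_order all_algebra.
From mathcomp Require Import reals ring lra.
Import Order.TTheory GRing.Theory Num.Theory.
Set Implicit Arguments.
Unset Strict Implicit.
Local Open Scope ring_scope.

(* Algorithm 1 is Nesterov's accelerated projected gradient ascent on the dual of the
   regularized problem  min sum_j (x_j + delta/2 x_j^2)  s.t.  A x >= 1, 0 <= x <= 1.
   The Lagrangian is minimized coordinatewise by xhat(lam) = proj01 ((A lam - 1) / delta),
   and since the norm of A is at most d+1 the dual function phi has a
   (d+1)^2/delta-Lipschitz gradient, for which alpha is an admissible step.  With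
   A_k = (k+1)(k+2)/4 one has z^(k) = A_k (1 - A xbar^(k)), and the iterates satisfy the
   estimate-sequence invariant
     A_k f(xbar^(k)) + <z^(k), nu> - |nu|^2 / (2 alpha) <= A_k phi(mu^(k))   for all nu >= 0.
   Taking nu = alpha A_k [1 - A xbar^(k)]_+ and bounding phi by weak duality at the
   feasible point min(x*, 1) gives 1'x^(k) <= (1 + delta/2) 1'x* + N / (2 alpha A_k).
   Finally N <= (d+1) 1'x*, so the error term is at most delta/2 1'x* as soon as
   k >= 3 (d+1)^(3/2) / delta. *)

Section ScalarInequalities.
Variable R : realFieldType.

Lemma mul_le_amgm (c p q : R) : 0 < c -> p * q <= c / 2 * p ^+ 2 + (2 * c)^-1 * q ^+ 2.
Proof.
move=> c_gt0.
have -> : c / 2 * p ^+ 2 + (2 * c)^-1 * q ^+ 2 = p * q + (c * p - q) ^+ 2 / (2 * c).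
  by field; lra.
by rewrite lerDl divr_ge0 ?sqr_ge0 // ltW // mulr_gt0.
Qed.

Lemma sub_quad_le (c r : R) : 0 < c -> r - c * r ^+ 2 <= (4 * c)^-1.
Proof.
move=> c_gt0.
have -> : (4 * c)^-1 = r - c * r ^+ 2 + (2 * c * r - 1) ^+ 2 / (4 * c) by field; lra.
by rewrite lerDl divr_ge0 ?sqr_ge0 // ltW // mulr_gt0.
Qed.

Lemma quad_convex (delta p x u : R) : 0 <= delta -> 0 <= p <= 1 ->
  (p * x + (1 - p) * u) + delta / 2 * (p * x + (1 - p) * u) ^+ 2
  <= p * (x + delta / 2 * x ^+ 2) + (1 - p) * (u + delta / 2 * u ^+ 2).
Proof.
move=> delta_ge0 /andP[p_ge0 p_le1].
have -> : p * (x + delta / 2 * x ^+ 2) + (1 - p) * (u + delta / 2 * u ^+ 2)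
  = (p * x + (1 - p) * u) + delta / 2 * (p * x + (1 - p) * u) ^+ 2
    + delta / 2 * (p * (1 - p) * (x - u) ^+ 2) by ring.
by rewrite lerDl mulr_ge0 ?divr_ge0 // mulr_ge0 ?sqr_ge0 // mulr_ge0 ?subr_ge0.
Qed.

End ScalarInequalities.

Lemma accelerated_error_le (R : rcfType) (d eps O n A t : R) :
  0 < d -> 0 < eps -> 0 <= O -> 0 < A -> n <= d * O -> t ^+ 2 <= 4 * A ->
  3 * (d * Num.sqrt d) <= t * eps -> n * d ^+ 2 / (eps * A) <= eps / 2 * O.
Proof.
move=> d_gt0 eps_gt0 O_ge0 A_gt0 n_le t_le t_ge.
have sqrt_ge0 := sqrtr_ge0 d.
have sq_t : 9 * d ^+ 3 <= (t * eps) ^+ 2.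
  have lhs_ge0 : 0 <= 3 * (d * Num.sqrt d) by rewrite mulr_ge0 // mulr_ge0 // ltW.
  have := ler_pM lhs_ge0 lhs_ge0 t_ge t_ge.
  have -> : 3 * (d * Num.sqrt d) * (3 * (d * Num.sqrt d)) = 9 * d ^+ 2 * Num.sqrt d ^+ 2.
    by ring.
  by rewrite (sqr_sqrtr (ltW d_gt0)) -mulrA -exprSr expr2; apply.
rewrite ler_pdivrMr ?mulr_gt0 //.
have := ler_wpM2r (sqr_ge0 d) n_le.
have := ler_wpM2l (sqr_ge0 eps) t_le.
have : 0 <= eps ^+ 2 * A * O by rewrite mulr_ge0 // mulr_ge0 ?sqr_ge0 // ltW.
move: sq_t; rewrite exprMn; nra.
Qed.

Section Projections.
Variable R : realType.

Lemma pos_ge0 (c : R) : 0 <= pos c.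
Proof. by rewrite /pos le_max lexx. Qed.

Lemma mul_pos (c : R) : c * pos c = pos c ^+ 2.
Proof. by rewrite /pos maxElt; case: ifP; rewrite ?mulr0 ?expr0n. Qed.

Lemma proj01_box (c : R) : 0 <= proj01 c <= 1.
Proof. by rewrite /proj01 le_min ler01 le_max lexx ge_min lexx. Qed.

Lemma proj01_strong_min (delta c s t : R) : 0 < delta -> 0 <= s <= 1 ->
  t = proj01 (delta^-1 * (c - 1)) ->
  t + delta / 2 * t ^+ 2 - c * t + delta / 2 * (s - t) ^+ 2 <= s + delta / 2 * s ^+ 2 - c * s.
Proof.
move=> delta_gt0 /andP[s_ge0 s_le1] tE.
have -> : s + delta / 2 * s ^+ 2 - c * s = t + delta / 2 * t ^+ 2 - c * t
    + delta / 2 * (s - t) ^+ 2 + (delta * t + 1 - c) * (s - t) by field.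
rewrite lerDl.
have : c - 1 = delta * (delta^-1 * (c - 1)) by rewrite mulrA mulfV ?mul1r ?gt_eqF.
move: tE; rewrite /proj01; set w := delta^-1 * (c - 1) => tE cE.
move: tE; rewrite maxElt; case: ifP => w_gt0; rewrite minElt; case: ifP => w_gt1 ->.
- have : delta <= delta * w by rewrite ler_pMr // ltW.
  move=> ?; apply: mulr_le0; lra.
- by rewrite (_ : delta * w + 1 - c = 0) ?mul0r //; lra.
- lra.
- have : delta * w <= 0 by rewrite pmulr_rle0 // leNgt w_gt0.
  move=> ?; apply: mulr_ge0; lra.
Qed.

Lemma pos_prox_max (alpha l g y : R) : 0 < alpha -> 0 <= y ->
  y * g - (2 * alpha)^-1 * (y - l) ^+ 2
  <= pos (l + alpha * g) * g - (2 * alpha)^-1 * (pos (l + alpha * g) - l) ^+ 2.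
Proof.
move=> alpha_gt0 y_ge0.
have K_gt0 : 0 < (2 * alpha)^-1 by rewrite invr_gt0 mulr_gt0.
rewrite /pos maxElt; case: ifP => step_gt0.
- have -> : (l + alpha * g) * g - (2 * alpha)^-1 * ((l + alpha * g) - l) ^+ 2
    = y * g - (2 * alpha)^-1 * (y - l) ^+ 2 + (2 * alpha)^-1 * (y - (l + alpha * g)) ^+ 2.
    by field; lra.
  by rewrite lerDl mulr_ge0 ?sqr_ge0 // ltW.
- have step_le0 : l + alpha * g <= 0 by rewrite leNgt step_gt0.
  have -> : 0 * g - (2 * alpha)^-1 * (0 - l) ^+ 2
    = y * g - (2 * alpha)^-1 * (y - l) ^+ 2 + (2 * alpha)^-1 * (y * (y - 2 * (l + alpha * g))).
    by field; lra.
  rewrite lerDl mulr_ge0 ?(ltW K_gt0) // mulr_ge0 //; lra.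
Qed.

Lemma pos_scaled_max (alpha z y : R) : 0 < alpha -> 0 <= y ->
  z * y - (2 * alpha)^-1 * y ^+ 2 + (2 * alpha)^-1 * (y - alpha * pos z) ^+ 2
  <= z * (alpha * pos z) - (2 * alpha)^-1 * (alpha * pos z) ^+ 2.
Proof.
move=> alpha_gt0 y_ge0.
rewrite /pos maxElt; case: ifP => z_gt0.
- by rewrite le_eqVlt; apply/orP; left; apply/eqP; field; lra.
- have z_le0 : z <= 0 by rewrite leNgt z_gt0.
  rewrite !mulr0 expr0n /= mulr0 subr0 (_ : _ + _ = z * y); last by field; lra.
  by rewrite subr0 mulr_le0_ge0.
Qed.

End Projections.

Section Graph.
Variables (R : realType) (N : nat) (e : rel 'I_N).
Hypothesis e_sym : symmetric e.

Let d1 : R := (dmax e).+1%:R.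

Lemma Omega_sym (i j : 'I_N) : (j \in Omega e i) = (i \in Omega e j).
Proof. by rewrite !inE eq_sym e_sym. Qed.

Lemma nsum_mkcond (v : 'I_N -> R) i :
  nsum e v i = \sum_j (if j \in Omega e i then v j else 0).
Proof. exact: big_mkcond. Qed.

Lemma sum_mul_nsumC (a b : 'I_N -> R) :
  \sum_i a i * nsum e b i = \sum_j b j * nsum e a j.
Proof.
transitivity (\sum_i \sum_j (if j \in Omega e i then a i * b j else 0)).
  apply: eq_bigr => i _; rewrite nsum_mkcond mulr_sumr; apply: eq_bigr => j _.
  by case: ifP; rewrite ?mulr0.
rewrite exchange_big; apply: eq_bigr => j _; rewrite nsum_mkcond mulr_sumr.
by apply: eq_bigr => i _; rewrite Omega_sym; case: ifP; rewrite ?mulr0 // mulrC.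
Qed.

Lemma nsum_lin (a b : R) (x y : 'I_N -> R) i :
  nsum e (fun j => a * x j + b * y j) i = a * nsum e x i + b * nsum e y i.
Proof. by rewrite /nsum big_split /= -!mulr_sumr. Qed.

Lemma nsumB (x y : 'I_N -> R) i :
  nsum e (fun j => x j - y j) i = nsum e x i - nsum e y i.
Proof. exact: sumrB. Qed.

Lemma nsum1 (j : 'I_N) : nsum e (fun _ => 1 : R) j = #|Omega e j|%:R.
Proof. exact: sumr_const. Qed.

Lemma card_Omega_le (j : 'I_N) : #|Omega e j|%:R <= d1.
Proof.
have Omega_gt0 : (0 < #|Omega e j|)%N by apply/card_gt0P; exists j; rewrite inE eqxx.
rewrite ler_nat -(prednK Omega_gt0) ltnS.
exact: (@leq_bigmax _ (degree e) j).
Qed.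

(* The neighbourhood-sum operator has norm at most d1; this is where the Lipschitz
   constant d1^2 / delta of the dual gradient comes from. *)
Lemma sum_mul_nsum_le (delta : R) (p q : 'I_N -> R) : 0 < delta ->
  \sum_i p i * nsum e q i
  <= d1 ^+ 2 / (2 * delta) * \sum_i p i ^+ 2 + delta / 2 * \sum_j q j ^+ 2.
Proof.
move=> delta_gt0.
have d1_gt0 : 0 < d1 by rewrite ltr0Sn.
set c := d1 / delta.
have c_gt0 : 0 < c by rewrite divr_gt0.
have amgm : \sum_i p i * nsum e q i <= \sum_i (c / 2 * p i ^+ 2 * #|Omega e i|%:R
    + (2 * c)^-1 * nsum e (fun j => q j ^+ 2) i).
  apply: ler_sum => i _; rewrite -nsum1 /nsum !mulr_sumr -big_split /=.
  by apply: ler_sum => j _; rewrite mulr1 mul_le_amgm.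
apply: (le_trans amgm); rewrite big_split /= -mulr_sumr.
have -> : \sum_i nsum e (fun j => q j ^+ 2) i = \sum_j q j ^+ 2 * #|Omega e j|%:R.
  under eq_bigr do rewrite -[nsum _ _ _]mul1r.
  by rewrite sum_mul_nsumC; under eq_bigr do rewrite nsum1.
have p_le : \sum_i c / 2 * p i ^+ 2 * #|Omega e i|%:R <= c / 2 * d1 * \sum_i p i ^+ 2.
  rewrite mulr_sumr; apply: ler_sum => i _; rewrite [_ * d1 * _]mulrAC.
  by rewrite ler_wpM2l ?card_Omega_le // mulr_ge0 ?sqr_ge0 // divr_ge0 // ltW.
have q_le : \sum_j q j ^+ 2 * #|Omega e j|%:R <= d1 * \sum_j q j ^+ 2.
  rewrite mulr_sumr; apply: ler_sum => j _; rewrite mulrC.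
  by rewrite ler_wpM2r ?sqr_ge0 ?card_Omega_le.
have K_ge0 : 0 <= (2 * c)^-1 by rewrite invr_ge0 mulr_ge0 // ltW.
have := ler_wpM2l K_ge0 q_le.
have -> : (2 * c)^-1 * (d1 * \sum_j q j ^+ 2) = delta / 2 * \sum_j q j ^+ 2.
  by rewrite /c; field; lra.
have cd1E : c / 2 * d1 = d1 ^+ 2 / (2 * delta) by rewrite /c; field; lra.
rewrite cd1E in p_le.
lra.
Qed.

Lemma adjA_mulE (x : 'cV[R]_N) i : (adjA R e *m x) i 0 = nsum e (fun j => x j 0) i.
Proof.
rewrite mxE nsum_mkcond; apply: eq_bigr => j _; rewrite mxE inE eq_sym.
by case: ifP; rewrite ?mul1r ?mul0r.
Qed.

Lemma card_le_lp_obj (x : 'cV[R]_N) : lp_feasible e x -> N%:R <= d1 * lp_obj x.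
Proof.
move=> [x_cover x_ge0].
have : N%:R <= \sum_i 1 * nsum e (fun j => x j 0) i.
  rewrite -[N in N%:R]card_ord -sumr_const; apply: ler_sum => i _.
  by rewrite mul1r -adjA_mulE.
rewrite sum_mul_nsumC => /le_trans; apply.
rewrite /lp_obj mulr_sumr; apply: ler_sum => j _.
by rewrite nsum1 mulrC ler_wpM2r ?card_Omega_le.
Qed.

Lemma lp_obj_ge0 (x : 'cV[R]_N) : lp_feasible e x -> 0 <= lp_obj x.
Proof. by case=> _ x_ge0; rewrite sumr_ge0. Qed.

Lemma lp_feasible_clip (x : 'cV[R]_N) : lp_feasible e x ->
  forall i, 1 <= nsum e (fun j => Num.min (x j 0) 1) i.
Proof.
move=> [x_cover x_ge0] i.
have clip_ge0 j : 0 <= Num.min (x j 0) 1 by rewrite le_min x_ge0 ler01.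
have [/existsP[j /andP[j_in x_ge1]] | no_big] := boolP [exists j in Omega e i, 1 <= x j 0].
  rewrite /nsum (bigD1 j) //= (_ : Num.min _ _ = 1); last by rewrite minElt ltNge x_ge1.
  by rewrite lerDl sumr_ge0.
have -> : nsum e (fun j => Num.min (x j 0) 1) i = nsum e (fun j => x j 0) i;
  last by rewrite -adjA_mulE.
apply: eq_bigr => j j_in; rewrite minElt; case: ifP => // x_lt1.
by move/negP: no_big; case; apply/existsP; exists j; rewrite j_in leNgt x_lt1.
Qed.

End Graph.

Section Dual.
Variables (R : realType) (N : nat) (e : rel 'I_N).
Hypothesis e_sym : symmetric e.
Variable delta : R.
Hypothesis delta_gt0 : 0 < delta.

Let d1 : R := (dmax e).+1%:R.
Implicit Types x y u v m lam mu nu : 'I_N -> R.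

Definition xhat (lam : 'I_N -> R) i := proj01 (delta^-1 * (nsum e lam i - 1)).
Definition freg (x : 'I_N -> R) := \sum_j (x j + delta / 2 * x j ^+ 2).
Definition lagr (x lam : 'I_N -> R) := freg x + \sum_i lam i * (1 - nsum e x i).
Definition dual (lam : 'I_N -> R) := lagr (xhat lam) lam.
Definition sqdist (x y : 'I_N -> R) := \sum_i (x i - y i) ^+ 2.

Lemma sqdist_ge0 x y : 0 <= sqdist x y.
Proof. by rewrite sumr_ge0 // => i _; rewrite sqr_ge0. Qed.

Lemma xhat_box lam j : 0 <= xhat lam j <= 1.
Proof. exact: proj01_box. Qed.

Lemma lagrE x lam : lagr x lam =
  \sum_i lam i + \sum_j (x j + delta / 2 * x j ^+ 2 - nsum e lam j * x j).
Proof.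
rewrite /lagr /freg sumrB.
have -> : \sum_i lam i * (1 - nsum e x i) = \sum_i lam i - \sum_i lam i * nsum e x i.
  by rewrite -sumrB; apply: eq_bigr => i _; rewrite mulrBr mulr1.
rewrite sum_mul_nsumC //.
under [\sum_j nsum e lam j * x j]eq_bigr do rewrite mulrC.
lra.
Qed.

Lemma lagr_xhat_min lam x : (forall j, 0 <= x j <= 1) ->
  lagr (xhat lam) lam + delta / 2 * sqdist x (xhat lam) <= lagr x lam.
Proof.
move=> x_box; rewrite !lagrE -addrA lerD2l /sqdist mulr_sumr -big_split /=.
by apply: ler_sum => j _; apply: proj01_strong_min.
Qed.

Lemma dual_le_lagr mu x : (forall j, 0 <= x j <= 1) -> dual mu <= lagr x mu.
Proof.
move=> x_box; apply: le_trans (lagr_xhat_min mu x_box).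
by rewrite lerDl mulr_ge0 ?sqdist_ge0 // divr_ge0 // ltW.
Qed.

Lemma lagr_shift x lam mu :
  lagr x mu = lagr x lam + \sum_i (mu i - lam i) * (1 - nsum e x i).
Proof.
rewrite /lagr -addrA; congr (_ + _); rewrite -big_split /=.
by apply: eq_bigr => i _; ring.
Qed.

(* The descent lemma for the dual function, whose gradient is d1^2/delta-Lipschitz. *)
Lemma dual_ge_linearization lam mu :
  lagr (xhat lam) mu - d1 ^+ 2 / (2 * delta) * sqdist mu lam <= dual mu.
Proof.
set w := xhat mu; set u := xhat lam.
have dualE : dual mu = lagr w lam + \sum_i (mu i - lam i) * (1 - nsum e w i).
  exact: lagr_shift.
have := lagr_shift u lam mu.
have : \sum_i (mu i - lam i) * (1 - nsum e w i) - \sum_i (mu i - lam i) * (1 - nsum e u i)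
   = - \sum_i (mu i - lam i) * nsum e (fun j => w j - u j) i.
  by rewrite -sumrB -sumrN; apply: eq_bigr => i _; rewrite nsumB; ring.
have := lagr_xhat_min lam (xhat_box mu).
have := sum_mul_nsum_le e_sym (fun i => mu i - lam i) (fun j => w j - u j) delta_gt0.
rewrite /= -/w -/u -/(sqdist mu lam) -/(sqdist w u); lra.
Qed.

Lemma freg_convex p x u : 0 <= p <= 1 ->
  freg (fun j => p * x j + (1 - p) * u j) <= p * freg x + (1 - p) * freg u.
Proof.
move=> p01; rewrite /freg !mulr_sumr -big_split /=.
by apply: ler_sum => j _; apply: quad_convex => //; apply: ltW.
Qed.

Lemma freg_clip_le (x : 'cV[R]_N) : (forall j, 0 <= x j 0) ->
  freg (fun j => Num.min (x j 0) 1) <= (1 + delta / 2) * lp_obj x.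
Proof.
move=> x_ge0; rewrite /lp_obj /freg mulr_sumr; apply: ler_sum => j _.
set t := Num.min (x j 0) 1.
have t_ge0 : 0 <= t by rewrite le_min x_ge0 ler01.
have t_le1 : t <= 1 by rewrite ge_min lexx orbT.
have t_le : t <= x j 0 by rewrite ge_min lexx.
have delta2_ge0 : 0 <= delta / 2 by rewrite divr_ge0 // ltW.
have t2_le : t ^+ 2 <= t by rewrite expr2 ler_piMl.
have := ler_wpM2l delta2_ge0 t_le.
have := ler_wpM2l delta2_ge0 t2_le.
lra.
Qed.

Lemma dual_le_freg mu x : (forall i, 0 <= mu i) -> (forall j, 0 <= x j <= 1) ->
  (forall i, 1 <= nsum e x i) -> dual mu <= freg x.
Proof.
move=> mu_ge0 x_box x_cover; apply: le_trans (dual_le_lagr mu x_box) _.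
rewrite /lagr gerDl sumr_le0 // => i _.
by rewrite mulr_ge0_le0 // subr_le0.
Qed.

Variable alpha : R.
Hypothesis alpha_gt0 : 0 < alpha.
Hypothesis alpha_small : d1 ^+ 2 / (2 * delta) <= (2 * alpha)^-1.

Definition dual_step (lam : 'I_N -> R) i := pos (lam i + alpha * (1 - nsum e (xhat lam) i)).

Lemma dual_step_ge0 lam i : 0 <= dual_step lam i.
Proof. exact: pos_ge0. Qed.

Lemma lagr_prox_max u lam y : (forall i, 0 <= y i) ->
  lagr u y - (2 * alpha)^-1 * sqdist y lam
  <= lagr u (fun i => pos (lam i + alpha * (1 - nsum e u i)))
     - (2 * alpha)^-1 * sqdist (fun i => pos (lam i + alpha * (1 - nsum e u i))) lam.
Proof.
move=> y_ge0.
set g := fun i => 1 - nsum e u i.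
have : \sum_i (y i * g i - (2 * alpha)^-1 * (y i - lam i) ^+ 2)
  <= \sum_i (pos (lam i + alpha * g i) * g i
              - (2 * alpha)^-1 * (pos (lam i + alpha * g i) - lam i) ^+ 2).
  by apply: ler_sum => i _; apply: pos_prox_max.
rewrite !sumrB -!mulr_sumr /lagr /sqdist; lra.
Qed.

Lemma dual_step_ascent lam y c : (forall i, 0 <= y i) -> (2 * alpha)^-1 <= c ->
  lagr (xhat lam) y - c * sqdist y lam <= dual (dual_step lam).
Proof.
move=> y_ge0 c_ge.
have := lagr_prox_max (xhat lam) lam y_ge0.
have := dual_ge_linearization lam (dual_step lam).
have : (2 * alpha)^-1 * sqdist y lam <= c * sqdist y lam by rewrite ler_wpM2r ?sqdist_ge0.
have : d1 ^+ 2 / (2 * delta) * sqdist (dual_step lam) lam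
       <= (2 * alpha)^-1 * sqdist (dual_step lam) lam by rewrite ler_wpM2r ?sqdist_ge0.
rewrite /dual_step; lra.
Qed.

Lemma sum_pos_scaled_max z v nu : (forall i, v i = alpha * pos (z i)) ->
  (forall i, 0 <= nu i) ->
  \sum_i z i * nu i - (2 * alpha)^-1 * \sum_i nu i ^+ 2 + (2 * alpha)^-1 * sqdist nu v
  <= \sum_i z i * v i - (2 * alpha)^-1 * \sum_i v i ^+ 2.
Proof.
move=> vE nu_ge0.
have : \sum_i (z i * nu i - (2 * alpha)^-1 * nu i ^+ 2 + (2 * alpha)^-1 * (nu i - v i) ^+ 2)
    <= \sum_i (z i * v i - (2 * alpha)^-1 * v i ^+ 2).
  by apply: ler_sum => i _; rewrite vE pos_scaled_max.
by rewrite big_split /= !sumrB -!mulr_sumr.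
Qed.

(* One accelerated step, with weights a = A_k and b = (k+2)/2 in the application. *)
Lemma dual_step_mix_ascent (a b : R) m v nu lam :
  0 <= a -> 0 < b -> b ^+ 2 <= a + b ->
  (forall i, 0 <= m i) -> (forall i, 0 <= nu i) ->
  (forall i, lam i = (a * m i + b * v i) / (a + b)) ->
  a * lagr (xhat lam) m + b * lagr (xhat lam) nu - (2 * alpha)^-1 * sqdist nu v
  <= (a + b) * dual (dual_step lam).
Proof.
move=> a_ge0 b_gt0 b_le m_ge0 nu_ge0 lamE.
have ab_gt0 : 0 < a + b by lra.
pose y i := (a * m i + b * nu i) / (a + b).
have y_ge0 i : 0 <= y i by rewrite divr_ge0 ?addr_ge0 ?mulr_ge0 ?m_ge0 ?nu_ge0 // ltW.
pose c := (2 * alpha)^-1 * ((a + b) / b ^+ 2).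
have c_ge : (2 * alpha)^-1 <= c.
  by rewrite ler_pMr ?invr_gt0 ?mulr_gt0 // ler_pdivlMr ?mul1r ?exprn_gt0.
set u := xhat lam.
have lagrE : (a + b) * lagr u y = a * lagr u m + b * lagr u nu.
  rewrite /lagr !mulrDr addrACA -mulrDl; congr (_ + _).
  rewrite !mulr_sumr -big_split /=; apply: eq_bigr => i _.
  by rewrite /y; field; rewrite gt_eqF.
have sqdistE : (a + b) * (c * sqdist y lam) = (2 * alpha)^-1 * sqdist nu v.
  rewrite /sqdist !mulr_sumr; apply: eq_bigr => i _.
  rewrite lamE /y /c; field.
  by rewrite !gt_eqF // ?mulr_gt0.
have := ler_wpM2l (ltW ab_gt0) (dual_step_ascent lam y_ge0 c_ge).
by rewrite mulrBr lagrE sqdistE.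
Qed.

End Dual.

Section Algorithm.
Variables (R : realType) (N : nat) (e : rel 'I_N).
Hypothesis e_sym : symmetric e.
Variables delta alpha : R.
Hypotheses (delta_gt0 : 0 < delta) (alpha_gt0 : 0 < alpha).
Hypothesis alpha_small : (dmax e).+1%:R ^+ 2 / (2 * delta) <= (2 * alpha)^-1 :> R.

(* The state before iteration k stores z^(k-1) and xbar^(k-1), hence the shift in zeta. *)
Definition lam k := st_lambda (alg_state_at e delta alpha k).
Definition zeta k := st_z (alg_state_at e delta alpha k.+1).
Definition mu k := dual_step e delta alpha (lam k).
Local Notation xb := (xbar e delta alpha).

Definition Acoef (k : nat) : R := k.+1%:R * k.+2%:R / 4.

Lemma Acoef_gt0 k : 0 < Acoef k.
Proof. by rewrite divr_gt0 ?mulr_gt0. Qed.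

Lemma Acoef_ge k : k%:R ^+ 2 <= 4 * Acoef k.
Proof.
rewrite /Acoef (_ : 4 * _ = k.+1%:R * k.+2%:R); last by field.
by rewrite -!natr1; have := ler0n R k; nra.
Qed.

Lemma AcoefS k : Acoef k.+1 = Acoef k + k.+2%:R / 2.
Proof. by rewrite /Acoef -!natr1; field. Qed.

Lemma Acoef_ratio k : Acoef k / Acoef k.+1 = k.+1%:R / k.+3%:R.
Proof. by rewrite /Acoef -!natr1; field; rewrite !natr1 !pnatr_eq0. Qed.

Lemma Acoef_ratioC k : 1 - Acoef k / Acoef k.+1 = 2 / k.+3%:R.
Proof. by rewrite /Acoef -!natr1; field; rewrite !natr1 !pnatr_eq0. Qed.

Lemma lamS k i : lam k.+1 i
  = Acoef k / Acoef k.+1 * mu k i + (1 - Acoef k / Acoef k.+1) * (alpha * pos (zeta k i)).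
Proof. by rewrite Acoef_ratioC Acoef_ratio mulrA. Qed.

Lemma zeta0 i : zeta 0 i = 2^-1 * (1 - nsum e (xhat e delta (lam 0)) i).
Proof. by rewrite /zeta /= (_ : xhat_of _ _ _ = xhat e delta (lam 0)) //; lra. Qed.

Lemma zetaS k i :
  zeta k.+1 i = zeta k i + k.+2%:R / 2 * (1 - nsum e (xhat e delta (lam k.+1)) i).
Proof. by []. Qed.

Lemma xbar0 j : xb 0 j = xhat e delta (lam 0) j.
Proof. by rewrite /xbar /= (_ : xhat_of _ _ _ = xhat e delta (lam 0)) //; lra. Qed.

Lemma xbarS k : xb k.+1 = fun j => Acoef k / Acoef k.+1 * xb k j
  + (1 - Acoef k / Acoef k.+1) * xhat e delta (lam k.+1) j.
Proof. by rewrite Acoef_ratioC Acoef_ratio. Qed.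

Lemma zetaE k i : zeta k i = Acoef k * (1 - nsum e (xb k) i).
Proof.
elim: k i => [|k IH] i.
  by rewrite zeta0 /nsum (eq_bigr _ (fun j _ => xbar0 j)) /Acoef; field.
rewrite zetaS IH xbarS [in RHS]nsum_lin AcoefS.
by field; apply: lt0r_neq0; have := Acoef_gt0 k; have := ler0n R k; lra.
Qed.

Definition estimate k := forall nu, (forall i, 0 <= nu i) ->
  Acoef k * freg delta (xb k) + \sum_i zeta k i * nu i - (2 * alpha)^-1 * \sum_i nu i ^+ 2
  <= Acoef k * dual e delta (mu k).

Lemma estimate0 : estimate 0.
Proof.
move=> nu nu_ge0; set u := xhat e delta (lam 0).
have lam0E i : lam 0 i = (0 * 0 + 2^-1 * 0) / (0 + 2^-1) by rewrite !mulr0 addr0 mul0r.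
have half_gt0 : 0 < 2^-1 :> R by rewrite invr_gt0.
have half_sq : 2^-1 ^+ 2 <= 0 + 2^-1 :> R by rewrite add0r expr2; lra.
have := dual_step_mix_ascent e_sym delta_gt0 alpha_gt0 alpha_small (lexx 0) half_gt0 half_sq
  (fun _ => lexx 0) nu_ge0 lam0E.
have -> : sqdist nu (fun _ => 0) = \sum_i nu i ^+ 2 by apply: eq_bigr => i _; rewrite subr0.
have -> : Acoef 0 = 2^-1 by rewrite /Acoef; field.
have -> : freg delta (xb 0) = freg delta u by apply: eq_bigr => j _; rewrite xbar0.
have -> : \sum_i zeta 0 i * nu i = 2^-1 * \sum_i nu i * (1 - nsum e u i).
  by rewrite mulr_sumr; apply: eq_bigr => i _; rewrite zeta0 -/u; ring.
rewrite /lagr; lra.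
Qed.

Lemma estimateS k : estimate k -> estimate k.+1.
Proof.
move=> IH nu nu_ge0.
set a := Acoef k; set b := k.+2%:R / 2 : R; set u := xhat e delta (lam k.+1).
pose v i := alpha * pos (zeta k i).
have a_gt0 : 0 < a := Acoef_gt0 k.
have b_gt0 : 0 < b by rewrite divr_gt0.
have AS : Acoef k.+1 = a + b := AcoefS k.
have b_le : b ^+ 2 <= a + b.
  rewrite -subr_ge0 (_ : a + b - b ^+ 2 = k.+2%:R / 4) ?divr_ge0 //.
  by rewrite /a /b /Acoef -!natr1; field.
have v_ge0 i : 0 <= v i by rewrite mulr_ge0 ?pos_ge0 // ltW.
have lamE i : lam k.+1 i = (a * mu k i + b * v i) / (a + b).
  by rewrite lamS AS -/a /v; field; rewrite gt_eqF ?addr_gt0.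
have mix := dual_step_mix_ascent e_sym delta_gt0 alpha_gt0 alpha_small (ltW a_gt0) b_gt0 b_le
  (dual_step_ge0 e delta alpha (lam k)) nu_ge0 lamE.
have p01 : 0 <= a / (a + b) <= 1.
  by rewrite -AS Acoef_ratio divr_ge0 //= ler_pdivrMr // mul1r ler_nat (leqW (leqnSn _)).
have := ler_wpM2l (ltW (addr_gt0 a_gt0 b_gt0)) (freg_convex delta_gt0 (xb k) u p01).
have -> : (a + b) * (a / (a + b) * freg delta (xb k) + (1 - a / (a + b)) * freg delta u)
  = a * freg delta (xb k) + b * freg delta u by field; rewrite gt_eqF ?addr_gt0.
rewrite xbarS AS.
have := @sum_pos_scaled_max _ _ _ alpha_gt0 (zeta k) v nu (fun i => erefl) nu_ge0.
have := IH v v_ge0.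
have := ler_wpM2l (ltW a_gt0)
  (dual_le_lagr e_sym delta_gt0 (mu k) (xhat_box e delta (lam k.+1))).
have -> : \sum_i zeta k.+1 i * nu i
    = \sum_i zeta k i * nu i + b * \sum_i nu i * (1 - nsum e u i).
  by rewrite mulr_sumr -big_split; apply: eq_bigr => i _; rewrite zetaS /= -/u -/b; ring.
move: mix; rewrite {2}/lagr /mu -/a -/u; lra.
Qed.

Lemma estimate_holds k : estimate k.
Proof. by elim: k => [|k]; [exact: estimate0 | exact: estimateS]. Qed.

Lemma freg_residual_le_dual k :
  freg delta (xb k) + alpha * Acoef k / 2 * \sum_i pos (1 - nsum e (xb k) i) ^+ 2
  <= dual e delta (mu k).
Proof.
set A := Acoef k; set r := fun i => pos (1 - nsum e (xb k) i).
have A_gt0 : 0 < A := Acoef_gt0 k.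
have nu_ge0 i : 0 <= alpha * A * r i by rewrite mulr_ge0 ?pos_ge0 // mulr_ge0 // ltW.
have := estimate_holds k nu_ge0; rewrite -addrA.
have -> : \sum_i zeta k i * (alpha * A * r i) - (2 * alpha)^-1 * \sum_i (alpha * A * r i) ^+ 2
  = A * (alpha * A / 2 * \sum_i r i ^+ 2).
  rewrite !mulr_sumr -sumrB; apply: eq_bigr => i _.
  rewrite zetaE -/A (_ : A * _ * _ = alpha * A ^+ 2 * ((1 - nsum e (xb k) i) * r i));
    last by ring.
  by rewrite mul_pos /r /=; field; rewrite gt_eqF.
by rewrite -/A -mulrDr ler_pM2l.
Qed.

Lemma lp_obj_alg_x_le k (xs : 'cV[R]_N) : lp_feasible e xs ->
  lp_obj (alg_x e delta alpha k) <= (1 + delta / 2) * lp_obj xs + N%:R / (2 * alpha * Acoef k).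
Proof.
move=> xs_feas; have [_ xs_ge0] := xs_feas.
set A := Acoef k.
have A_gt0 : 0 < A := Acoef_gt0 k.
have -> : lp_obj (alg_x e delta alpha k) = \sum_i xb k i + \sum_i pos (1 - nsum e (xb k) i).
  by rewrite /lp_obj -big_split; apply: eq_bigr => i _; rewrite mxE.
have clip_box j : 0 <= Num.min (xs j 0) 1 <= 1 by rewrite le_min xs_ge0 ler01 ge_min lexx orbT.
have := dual_le_freg e_sym delta_gt0 (dual_step_ge0 e delta alpha (lam k)) clip_box
  (lp_feasible_clip xs_feas).
have := freg_clip_le delta_gt0 xs_ge0.
have := freg_residual_le_dual k.
have : \sum_i xb k i <= freg delta (xb k).
  by apply: ler_sum => j _; rewrite lerDl mulr_ge0 ?sqr_ge0 // divr_ge0 // ltW.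
have : \sum_i pos (1 - nsum e (xb k) i)
    - alpha * A / 2 * \sum_i pos (1 - nsum e (xb k) i) ^+ 2 <= N%:R / (2 * alpha * A).
  have c_gt0 : 0 < alpha * A / 2 by rewrite divr_gt0 // mulr_gt0.
  have cE : (4 * (alpha * A / 2))^-1 = (2 * alpha * A)^-1 by congr (_^-1); field.
  have : \sum_i (pos (1 - nsum e (xb k) i)
                 - alpha * A / 2 * pos (1 - nsum e (xb k) i) ^+ 2)
      <= \sum_(i < N) (2 * alpha * A)^-1.
    by apply: ler_sum => i _; rewrite -cE sub_quad_le.
  by rewrite sumrB -mulr_sumr sumr_const card_ord [N%:R * _]mulr_natl.
rewrite /mu -/A; lra.
Qed.

End Algorithm.
Unset Implicit Arguments.

Theorem corollary1 (R : realType) :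
  exists C : R, 0 < C /\
  forall (N : nat) (e : rel 'I_N), symmetric e -> irreflexive e ->
  forall eps : R, 0 < eps -> eps <= 1 ->
  forall xs : 'cV[R]_N, lp_optimal e xs ->
  let d1 : R := (dmax e).+1%:R in
  let delta := eps in
  let alpha := delta / (2 * d1 ^+ 2) in
  forall k : nat, C * (d1 * Num.sqrt d1) / eps <= k%:R ->
    (lp_obj (alg_x e delta alpha k) - lp_obj xs) / lp_obj xs <= eps.
Proof.
exists 3; split=> // N e e_sym _ eps eps_gt0 _ xs [xs_feas _] d1 delta alpha k k_ge.
have d1_gt0 : 0 < d1 by rewrite ltr0Sn.
have alpha_gt0 : 0 < alpha by rewrite divr_gt0 ?mulr_gt0 ?exprn_gt0.
have alpha_small : d1 ^+ 2 / (2 * delta) <= (2 * alpha)^-1.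
  have -> : (2 * alpha)^-1 = d1 ^+ 2 / delta.
    by rewrite /alpha /delta; field; rewrite !gt_eqF // addrC natr1 ltr0Sn.
  have : 0 <= d1 ^+ 2 / delta by rewrite divr_ge0 ?sqr_ge0 ?ltW.
  rewrite invfM; lra.
have obj_le := lp_obj_alg_x_le e_sym eps_gt0 alpha_gt0 alpha_small k xs_feas.
have err_le : N%:R / (2 * alpha * Acoef R k) <= eps / 2 * lp_obj xs.
  rewrite (_ : N%:R / _ = N%:R * d1 ^+ 2 / (eps * Acoef R k)); last first.
    by rewrite /alpha /delta; field; rewrite !gt_eqF ?Acoef_gt0 // addrC natr1 ltr0Sn.
  apply: accelerated_error_le (card_le_lp_obj e_sym xs_feas) (Acoef_ge R k) _ => //.
  - exact: lp_obj_ge0 xs_feas.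
  - exact: Acoef_gt0.
  - by rewrite -ler_pdivrMr.
have [->|O_neq0] := eqVneq (lp_obj xs) 0; first by rewrite invr0 mulr0 ltW.
rewrite ler_pdivrMr ?lt0r ?O_neq0 ?(lp_obj_ge0 xs_feas) //.
rewrite /delta in obj_le; lra.
Qed.
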